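(* Let $G$ be a bipartite graph that is not planar. Then there are no finite point sets $P,W$ in the plane with $P\cup W$ in general position such that $\mathrm{DG}^-(P,W)$ is isomorphic to $G$.
   Context: Let $P$ (the vertices) and $W$ (the witnesses) be finite point sets in $\mathbb{R}^2$; $P$ and $W$ may share points. The witness Delaunay graph $\mathrm{DG}^-(P,W)$ is the graph with vertex set $P$ in which distinct $x,y\in P$ are adjacent if and only if there is an open disk containing no point of $W$ whose bounding circle passes through $x$ and $y$. General position of $P\cup W$ means that no three distinct points of $P\cup W$ are collinear and no four distinct points of $P\cup W$ are concyclic. *)

From Stdlib Require Import Reals List.
Open Scope R_scope.

Definition pt := (R * R)%type.

Definition dist2 (p q : pt) : R := (fst p - fst q)^2 + (snd p - snd q)^2.

Definition collinear3 (a b c : pt) : Prop :=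
  (fst b - fst a) * (snd c - snd a) - (snd b - snd a) * (fst c - fst a) = 0.

Definition concyclic4 (a b c d : pt) : Prop :=
  exists (o : pt) (r : R), 0 < r /\
    dist2 o a = r^2 /\ dist2 o b = r^2 /\ dist2 o c = r^2 /\ dist2 o d = r^2.

Definition general_position (S : list pt) : Prop :=
  (forall a b c, In a S -> In b S -> In c S ->
     a <> b -> a <> c -> b <> c -> ~ collinear3 a b c) /\
  (forall a b c d, In a S -> In b S -> In c S -> In d S ->
     a <> b -> a <> c -> a <> d -> b <> c -> b <> d -> c <> d ->
     ~ concyclic4 a b c d).

(* adjacency in the witness Delaunay graph DG^-(P,W): there is an open disk
   (center o, radius r) containing no point of W whose boundary circle
   passes through x and y *)
Definition wdg_adj (W : list pt) (x y : pt) : Prop :=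
  x <> y /\
  exists (o : pt) (r : R), 0 < r /\ dist2 o x = r^2 /\ dist2 o y = r^2 /\
    forall w, In w W -> ~ (dist2 o w < r^2).

Definition iso_to_wdg (V : Type) (adj : V -> V -> Prop) (P W : list pt) : Prop :=
  exists phi : V -> pt,
    (forall u v, phi u = phi v -> u = v) /\
    (forall p, In p P <-> exists v, phi v = p) /\
    (forall u v, adj u v <-> wdg_adj W (phi u) (phi v)).

Definition bipartite (V : Type) (adj : V -> V -> Prop) : Prop :=
  exists c : V -> bool, forall u v, adj u v -> c u <> c v.

Definition same_edge {V : Type} (u v u' v' : V) : Prop :=
  (u = u' /\ v = v') \/ (u = v' /\ v = u').

Definition planar (V : Type) (adj : V -> V -> Prop) : Prop :=
  exists (pos : V -> pt) (arc : V -> V -> R -> pt),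
    (forall u v, pos u = pos v -> u = v) /\
    (forall u v, adj u v ->
       continuity (fun t => fst (arc u v t)) /\
       continuity (fun t => snd (arc u v t)) /\
       arc u v 0 = pos u /\ arc u v 1 = pos v /\
       (forall s t, 0 <= s <= 1 -> 0 <= t <= 1 -> arc u v s = arc u v t -> s = t) /\
       (forall t w, 0 < t < 1 -> arc u v t <> pos w)) /\
    (forall u v u' v' s t, adj u v -> adj u' v' -> ~ same_edge u v u' v' ->
       0 <= s <= 1 -> 0 <= t <= 1 -> arc u v s = arc u' v' t ->
       exists w, arc u v s = pos w).

(* Draw DG^-(P,W) with straight segments.  Suppose the edges xy and uv cross
   at an interior point, certified by witness-free disks D1 (through x, y) and
   D2 (through u, v).  If some endpoint, say x, lies strictly inside D2,
   shrinking D2 towards u and towards v gives the edges xu and xv, which form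
   a triangle with uv.  Otherwise the difference of the powers w.r.t. D1 and
   D2, an affine function, is <= 0 at x, y and >= 0 at u, v; at the crossing
   point it is therefore 0, which forces x, y, u, v onto the circle of D2,
   against general position.  Bipartite graphs are triangle-free, so the
   drawing is plane. *)
From Stdlib Require Import Reals List Lra Psatz Classical.
Open Scope R_scope.

Lemma pt_eq (a b : pt) : fst a = fst b -> snd a = snd b -> a = b.
Proof. destruct a, b; simpl; intros; subst; reflexivity. Qed.

Lemma dist2_pos (x u : pt) : x <> u -> 0 < dist2 x u.
Proof.
  intro Hxu. unfold dist2. rewrite <- !Rsqr_pow2.
  assert (0 <= Rsqr (fst x - fst u)) by apply Rle_0_sqr.
  assert (0 <= Rsqr (snd x - snd u)) by apply Rle_0_sqr.
  destruct (Req_dec (fst x) (fst u)) as [E1 | N1].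
  - assert (N2 : snd x - snd u <> 0) by (intro E2; apply Hxu, pt_eq; lra).
    assert (0 < Rsqr (snd x - snd u)) by (apply Rsqr_pos_lt; exact N2). lra.
  - assert (0 < Rsqr (fst x - fst u)) by (apply Rsqr_pos_lt; lra). lra.
Qed.

Definition seg (a b : pt) (s : R) : pt :=
  ((1 - s) * fst a + s * fst b, (1 - s) * snd a + s * snd b).

Lemma seg0 (a b : pt) : seg a b 0 = a.
Proof. apply pt_eq; unfold seg; simpl; ring. Qed.

Lemma seg1 (a b : pt) : seg a b 1 = b.
Proof. apply pt_eq; unfold seg; simpl; ring. Qed.

Lemma seg_rev (a b : pt) (s : R) : seg a b s = seg b a (1 - s).
Proof. apply pt_eq; unfold seg; simpl; ring. Qed.

Lemma continuity_seg_fst (a b : pt) : continuity (fun t => fst (seg a b t)).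
Proof. unfold seg; simpl; reg. Qed.

Lemma continuity_seg_snd (a b : pt) : continuity (fun t => snd (seg a b t)).
Proof. unfold seg; simpl; reg. Qed.

Lemma seg_inj (a b : pt) (s t : R) : a <> b -> seg a b s = seg a b t -> s = t.
Proof.
  intros Hab E. destruct (Req_dec s t) as [|Nst]; auto. exfalso; apply Hab.
  assert (E1 := f_equal fst E); assert (E2 := f_equal snd E).
  unfold seg in E1, E2; simpl in E1, E2.
  apply pt_eq.
  - assert (Z : (s - t) * (fst b - fst a) = 0) by lra.
    apply Rmult_integral in Z; destruct Z; lra.
  - assert (Z : (s - t) * (snd b - snd a) = 0) by lra.
    apply Rmult_integral in Z; destruct Z; lra.
Qed.

Lemma collinear3_seg (a b : pt) (t : R) : collinear3 a b (seg a b t).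
Proof. unfold collinear3, seg; simpl; ring. Qed.

Lemma seg_interior_neq (a b : pt) (t : R) :
  a <> b -> 0 < t < 1 -> seg a b t <> a /\ seg a b t <> b.
Proof.
  intros Hab Ht; split; intro E; apply Hab, pt_eq;
    [assert (E' := f_equal fst E) | assert (E' := f_equal snd E)
    |assert (E' := f_equal fst E) | assert (E' := f_equal snd E)];
    unfold seg in E'; simpl in E'; nra.
Qed.

Lemma collinear3_seg_common (a b c : pt) (s t : R) :
  0 < s -> seg a b s = seg a c t -> collinear3 a b c.
Proof.
  intros Hs E.
  assert (E1 := f_equal fst E); assert (E2 := f_equal snd E).
  unfold seg in E1, E2; simpl in E1, E2.
  assert (F1 : s * (fst b - fst a) = t * (fst c - fst a)) by lra.
  assert (F2 : s * (snd b - snd a) = t * (snd c - snd a)) by lra.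
  unfold collinear3.
  assert (K : s * ((fst b - fst a) * (snd c - snd a)
                   - (snd b - snd a) * (fst c - fst a)) = 0).
  { replace (s * ((fst b - fst a) * (snd c - snd a)
                  - (snd b - snd a) * (fst c - fst a)))
      with ((s * (fst b - fst a)) * (snd c - snd a)
            - (s * (snd b - snd a)) * (fst c - fst a)) by ring.
    rewrite F1, F2; ring. }
  apply Rmult_integral in K; destruct K; [lra | assumption].
Qed.

Definition power (o : pt) (r : R) (z : pt) : R := dist2 o z - r ^ 2.

Lemma power_diff_seg (o1 o2 : pt) (r1 r2 : R) (a b : pt) (s : R) :
  power o1 r1 (seg a b s) - power o2 r2 (seg a b s)
  = (1 - s) * (power o1 r1 a - power o2 r2 a)
    + s * (power o1 r1 b - power o2 r2 b).
Proof. unfold power, seg, dist2; simpl; ring. Qed.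

Definition homothety (u o : pt) (l : R) : pt :=
  (fst u + l * (fst o - fst u), snd u + l * (snd o - snd u)).

Lemma homothety_disk_sub (o u w : pt) (r l : R) :
  0 < l <= 1 -> dist2 o u = r ^ 2 ->
  dist2 (homothety u o l) w < (l * r) ^ 2 -> dist2 o w < r ^ 2.
Proof.
  intros Hl Hu Hw.
  set (e1 := fst w - fst (homothety u o l)); set (e2 := snd w - snd (homothety u o l)).
  set (g1 := fst u - fst o); set (g2 := snd u - snd o).
  assert (Hg : g1 ^ 2 + g2 ^ 2 = r ^ 2)
    by (rewrite <- Hu; unfold g1, g2, dist2; ring).
  assert (He : e1 ^ 2 + e2 ^ 2 < l ^ 2 * r ^ 2)
    by (unfold e1, e2; unfold dist2 in Hw; lra).
  assert (E : dist2 o w = (e1 ^ 2 + e2 ^ 2) + 2 * (1 - l) * (e1 * g1 + e2 * g2)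
                          + (1 - l) ^ 2 * (g1 ^ 2 + g2 ^ 2))
    by (unfold e1, e2, g1, g2, homothety, dist2; simpl; ring).
  (* Cauchy-Schwarz in the form |2 l <e, g>| <= |e|^2 + l^2 |g|^2 *)
  assert (CS : 2 * l * (e1 * g1 + e2 * g2) <= (e1 ^ 2 + e2 ^ 2) + l ^ 2 * r ^ 2).
  { rewrite <- Hg.
    assert (0 <= (e1 - l * g1) ^ 2) by apply pow2_ge_0.
    assert (0 <= (e2 - l * g2) ^ 2) by apply pow2_ge_0. nra. }
  rewrite Hg in E.
  assert (K : l * dist2 o w < l * r ^ 2).
  { rewrite E.
    assert (l * (2 * (1 - l) * (e1 * g1 + e2 * g2))
            <= (1 - l) * ((e1 ^ 2 + e2 ^ 2) + l ^ 2 * r ^ 2)) by nra.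
    nra. }
  nra.
Qed.

(* If x lies strictly inside a witness-free disk whose circle passes through
   u, shrinking the disk from u until its circle reaches x certifies xu. *)
Lemma wdg_adj_of_inside (W : list pt) (o : pt) (r : R) (x u : pt) :
  0 < r -> dist2 o x < r ^ 2 -> dist2 o u = r ^ 2 ->
  (forall w, In w W -> ~ dist2 o w < r ^ 2) -> x <> u -> wdg_adj W x u.
Proof.
  intros Hr Hx Hu HW Hxu. split; [exact Hxu |].
  set (q := dist2 x u).
  set (d := (fst x - fst u) * (fst o - fst u) + (snd x - snd u) * (snd o - snd u)).
  assert (Hq : 0 < q) by (apply dist2_pos; auto).
  assert (Id : dist2 o x = q - 2 * d + dist2 o u) by (unfold q, d, dist2; ring).
  set (l := q / (2 * d)).
  assert (Hl : l * (2 * d) = q) by (unfold l; field; lra).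
  assert (Hl0 : 0 < l) by (unfold l; apply Rdiv_lt_0_compat; lra).
  assert (Hl1 : l < 1) by nra.
  exists (homothety u o l), (l * r).
  split; [nra | split; [| split]].
  - assert (E : dist2 (homothety u o l) x - (l * r) ^ 2
                = (q - l * (2 * d)) + l ^ 2 * (dist2 o u - r ^ 2))
      by (unfold q, d, homothety, dist2; simpl; ring).
    rewrite Hl, Hu in E. lra.
  - assert (E : dist2 (homothety u o l) u - (l * r) ^ 2
                = l ^ 2 * (dist2 o u - r ^ 2))
      by (unfold homothety, dist2; simpl; ring).
    rewrite Hu in E. lra.
  - intros w Hw Hin. apply (HW w Hw).
    apply (homothety_disk_sub o u w r l); auto; lra.
Qed.

Lemma wdg_crossing_edges (P W : list pt) (x y u v : pt) (s t : R) :
  general_position (P ++ W) ->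
  In x P -> In y P -> In u P -> In v P ->
  x <> y -> x <> u -> x <> v -> y <> u -> y <> v -> u <> v ->
  wdg_adj W x y -> wdg_adj W u v -> 0 < s < 1 -> 0 < t < 1 ->
  seg x y s = seg u v t ->
  (wdg_adj W x u /\ wdg_adj W x v) \/ (wdg_adj W y u /\ wdg_adj W y v) \/
  (wdg_adj W u x /\ wdg_adj W u y) \/ (wdg_adj W v x /\ wdg_adj W v y).
Proof.
  intros [_ GP] Hx Hy Hu Hv Nxy Nxu Nxv Nyu Nyv Nuv
    [_ [o1 [r1 [Hr1 [Ex [Ey HW1]]]]]] [_ [o2 [r2 [Hr2 [Eu [Ev HW2]]]]]] Hs Ht E.
  destruct (Rlt_or_le (dist2 o2 x) (r2 ^ 2)) as [Ix | Ix].
  { left; split; apply (wdg_adj_of_inside W o2 r2); auto. }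
  destruct (Rlt_or_le (dist2 o2 y) (r2 ^ 2)) as [Iy | Iy].
  { right; left; split; apply (wdg_adj_of_inside W o2 r2); auto. }
  destruct (Rlt_or_le (dist2 o1 u) (r1 ^ 2)) as [Iu | Iu].
  { right; right; left; split; apply (wdg_adj_of_inside W o1 r1); auto. }
  destruct (Rlt_or_le (dist2 o1 v) (r1 ^ 2)) as [Iv | Iv].
  { right; right; right; split; apply (wdg_adj_of_inside W o1 r1); auto. }
  exfalso.
  (* the power difference is <= 0 along xy and >= 0 along uv *)
  assert (A1 := power_diff_seg o1 o2 r1 r2 x y s).
  assert (A2 := power_diff_seg o1 o2 r1 r2 u v t).
  rewrite E, A2 in A1. unfold power in A1. rewrite Ex, Ey, Eu, Ev in A1.
  assert (Zx : dist2 o2 x = r2 ^ 2) by nra.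
  assert (Zy : dist2 o2 y = r2 ^ 2) by nra.
  apply (GP x y u v); try (apply in_or_app; left; assumption); auto.
  exists o2, r2; repeat split; auto.
Qed.

Lemma bipartite_triangle_free (V : Type) (adj : V -> V -> Prop) :
  bipartite V adj -> forall a b c, adj a b -> adj b c -> adj a c -> False.
Proof.
  intros [col Hcol] a b c Hab Hbc Hac.
  apply Hcol in Hab; apply Hcol in Hbc; apply Hcol in Hac.
  destruct (col a), (col b), (col c); congruence.
Qed.

Section StraightLineDrawing.

Variables (V : Type) (adj : V -> V -> Prop) (P W : list pt) (phi : V -> pt).
Hypothesis phi_inj : forall u v, phi u = phi v -> u = v.
Hypothesis phi_in : forall v, In (phi v) P.
Hypothesis adj_wdg : forall u v, adj u v <-> wdg_adj W (phi u) (phi v).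
Hypothesis gpos : general_position (P ++ W).
Hypothesis triangle_free : forall a b c, adj a b -> adj b c -> adj a c -> False.

Let phi_neq (u v : V) : u <> v -> phi u <> phi v.
Proof. intros Huv E; apply Huv, phi_inj, E. Qed.

Let adj_neq (u v : V) : adj u v -> phi u <> phi v.
Proof. intro H; apply adj_wdg in H; apply H. Qed.

Let not_collinear (a b c : V) :
  a <> b -> a <> c -> b <> c -> ~ collinear3 (phi a) (phi b) (phi c).
Proof.
  intros Nab Nac Nbc. apply (proj1 gpos); try (apply in_or_app; left; apply phi_in);
    apply phi_neq; assumption.
Qed.

Let adjacent_edges_disjoint (u v v' : V) (s t : R) :
  u <> v -> u <> v' -> v <> v' -> 0 < s ->
  seg (phi u) (phi v) s = seg (phi u) (phi v') t -> False.
Proof.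
  intros Nuv Nuv' Nvv' Hs E.
  exact (not_collinear u v v' Nuv Nuv' Nvv' (collinear3_seg_common _ _ _ s t Hs E)).
Qed.

Let crossing_edges (u v u' v' : V) (s t : R) :
  adj u v -> adj u' v' -> u <> u' -> u <> v' -> v <> u' -> v <> v' ->
  0 < s < 1 -> 0 < t < 1 -> seg (phi u) (phi v) s = seg (phi u') (phi v') t -> False.
Proof.
  intros Huv Hu'v' N1 N2 N3 N4 Hs Ht E.
  assert (Nuv : u <> v) by (intro; subst; exact (adj_neq _ _ Huv eq_refl)).
  assert (Nu'v' : u' <> v') by (intro; subst; exact (adj_neq _ _ Hu'v' eq_refl)).
  destruct (wdg_crossing_edges P W (phi u) (phi v) (phi u') (phi v') s t)
    as [[A B] | [[A B] | [[A B] | [A B]]]];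
    auto; try (apply phi_neq; assumption); try (apply adj_wdg; assumption);
    apply adj_wdg in A; apply adj_wdg in B; eauto.
Qed.

Lemma straight_line_drawing_planar : planar V adj.
Proof.
  exists phi, (fun u v t => seg (phi u) (phi v) t).
  split; [exact phi_inj | split].
  - intros u v Huv. assert (N := adj_neq _ _ Huv).
    repeat split.
    + apply continuity_seg_fst.
    + apply continuity_seg_snd.
    + apply seg0.
    + apply seg1.
    + intros s t _ _ E; exact (seg_inj _ _ _ _ N E).
    + intros t w Ht E.
      destruct (seg_interior_neq (phi u) (phi v) t N Ht) as [Nu Nv].
      rewrite E in Nu, Nv.
      apply (not_collinear u v w); try (intro; subst; tauto).
      rewrite <- E; apply collinear3_seg.
  - intros u v u' v' s t Huv Hu'v' Hns Hs Ht E.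
    destruct (Req_dec s 0) as [-> | S0]. { exists u; apply seg0. }
    destruct (Req_dec s 1) as [-> | S1]. { exists v; apply seg1. }
    destruct (Req_dec t 0) as [-> | T0]. { exists u'; rewrite E; apply seg0. }
    destruct (Req_dec t 1) as [-> | T1]. { exists v'; rewrite E; apply seg1. }
    exfalso.
    assert (Hs' : 0 < s < 1) by lra. assert (Ht' : 0 < t < 1) by lra.
    assert (Nuv : u <> v) by (intro; subst; exact (adj_neq _ _ Huv eq_refl)).
    assert (Nu'v' : u' <> v') by (intro; subst; exact (adj_neq _ _ Hu'v' eq_refl)).
    destruct (classic (u = u')) as [<- | D1].
    { assert (Nvv' : v <> v') by (intro; subst; apply Hns; left; auto).
      exact (adjacent_edges_disjoint u v v' s t Nuv Nu'v' Nvv' (proj1 Hs') E). }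
    destruct (classic (u = v')) as [<- | D2].
    { assert (Nvu' : v <> u') by (intro; subst; apply Hns; right; auto).
      assert (E' : seg (phi u) (phi v) s = seg (phi u) (phi u') (1 - t))
        by (rewrite E; apply seg_rev).
      exact (adjacent_edges_disjoint u v u' s (1 - t) Nuv (not_eq_sym Nu'v') Nvu'
               (proj1 Hs') E'). }
    destruct (classic (v = u')) as [<- | D3].
    { assert (Nuv' : u <> v') by (intro; subst; apply Hns; right; auto).
      assert (E' : seg (phi v) (phi u) (1 - s) = seg (phi v) (phi v') t)
        by (rewrite <- seg_rev; exact E).
      exact (adjacent_edges_disjoint v u v' (1 - s) t (not_eq_sym Nuv) Nu'v' Nuv'
               ltac:(lra) E'). }
    destruct (classic (v = v')) as [<- | D4].
    { assert (Nuu' : u <> u') by (intro; subst; apply Hns; left; auto).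
      assert (E' : seg (phi v) (phi u) (1 - s) = seg (phi v) (phi u') (1 - t))
        by (rewrite <- !seg_rev; exact E).
      exact (adjacent_edges_disjoint v u u' (1 - s) (1 - t) (not_eq_sym Nuv)
               (not_eq_sym Nu'v') Nuu' ltac:(lra) E'). }
    exact (crossing_edges u v u' v' s t Huv Hu'v' D1 D2 D3 D4 Hs' Ht' E).
Qed.

End StraightLineDrawing.

Theorem mainTheorem7 (V : Type) (adj : V -> V -> Prop)
  (Hfin : exists l : list V, forall v, In v l)
  (Hsym : forall u v, adj u v -> adj v u)
  (Hirr : forall v, ~ adj v v)
  (Hbip : bipartite V adj)
  (Hnp : ~ planar V adj) :
  forall P W : list pt, general_position (P ++ W) -> ~ iso_to_wdg V adj P W.
Proof.
  intros P W Hgp [phi [Hinj [HP Hadj]]].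
  apply Hnp, (straight_line_drawing_planar V adj P W phi); auto.
  - intro v; apply HP; eauto.
  - exact (bipartite_triangle_free V adj Hbip).
Qed.
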